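(* Let $\kappa$ be a regular uncountable cardinal, let $\tau$ be a cardinal with $1 < \tau < \kappa$ and $\kappa^\tau = \kappa$, and let $J$ be a $\kappa$-complete ideal on $\kappa$ with $NS_\kappa \subseteq J$. Suppose that $\clubsuit_\kappa^{-/\tau}[J]$ holds. Then $\clubsuit_\kappa[J]$ holds.
   Context: An ideal on $\kappa$ is a nonempty $J \subseteq P(\kappa)$ with $\kappa \notin J$, every bounded subset of $\kappa$ in $J$, $J$ closed under subsets and under unions of two members; $J^+ = P(\kappa)\setminus J$; $\kappa$-complete means closed under unions of fewer than $\kappa$ members. $NS_\kappa$ is the nonstationary ideal; $[\kappa]^\kappa$ is the set of size-$\kappa$ subsets of $\kappa$; $acc(\kappa)$ is the set of nonzero limit ordinals below $\kappa$. $\clubsuit_\kappa^{-/\tau}[J]$: there are $B^i_\delta \subseteq \delta$ with $\sup B^i_\delta = \delta$ for $\delta \in acc(\kappa)$, $i < \tau$, such that $\{\delta \in acc(\kappa) : \exists i < \tau\,(B^i_\delta \subseteq W)\} \in J^+$ for every $W \in [\kappa]^\kappa$. $\clubsuit_\kappa[J]$: there are $s_\alpha \subseteq \alpha$ with $\sup s_\alpha = \alpha$ for $\alpha \in acc(\kappa)$ such that $\{\alpha \in acc(\kappa) : s_\alpha \subseteq A\} \in J^+$ for all $A \in [\kappa]^\kappa$. *)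

(* A cardinal kappa is modelled as a type T carrying a strict
   well-order lt whose proper initial segments all have cardinality < |T|
   (i.e. T with lt is (isomorphic to) the initial ordinal kappa). *)
From Stdlib Require Import Classical.

Set Implicit Arguments.

Definition card_le (A B : Type) : Prop :=
  exists f : A -> B, forall x y, f x = f y -> x = y.
Definition card_lt (A B : Type) : Prop := card_le A B /\ ~ card_le B A.
Definition card_eq (A B : Type) : Prop :=
  exists f : A -> B, (forall x y, f x = f y -> x = y) /\ (forall y, exists x, f x = y).

Section Ordinals.
Variable T : Type.
Variable lt : T -> T -> Prop.

Definition strict_wellorder : Prop :=
  (forall x y z, lt x y -> lt y z -> lt x z) /\
  (forall x y, lt x y \/ x = y \/ lt y x) /\
  well_founded lt.

Definition is_cardinal_order : Prop :=
  strict_wellorder /\ forall a : T, card_lt {x : T | lt x a} T.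

Definition le (x y : T) : Prop := lt x y \/ x = y.

Definition bounded (X : T -> Prop) : Prop := exists a, forall x, X x -> lt x a.

Definition regular : Prop :=
  forall X : T -> Prop, card_lt {x : T | X x} T -> bounded X.

Definition uncountable : Prop := ~ card_le T nat.

Definition acc (d : T) : Prop :=
  (exists b, lt b d) /\ (forall b, lt b d -> exists g, lt b g /\ lt g d).

Definition sub_cofinal (B : T -> Prop) (d : T) : Prop :=
  (forall x, B x -> lt x d) /\ (forall b, lt b d -> exists g, B g /\ le b g).

Definition unbounded (C : T -> Prop) : Prop := forall a, exists b, C b /\ le a b.

Definition closed (C : T -> Prop) : Prop :=
  forall d, acc d -> (forall b, lt b d -> exists g, C g /\ le b g /\ lt g d) -> C d.

Definition club (C : T -> Prop) : Prop := closed C /\ unbounded C.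

Definition nonstationary (A : T -> Prop) : Prop :=
  exists C, club C /\ forall x, C x -> ~ A x.

Definition size_kappa (W : T -> Prop) : Prop := card_eq {x : T | W x} T.

Definition subset (A B : T -> Prop) : Prop := forall x, A x -> B x.

Definition ideal (J : (T -> Prop) -> Prop) : Prop :=
  (exists A, J A) /\
  ~ J (fun _ => True) /\
  (forall A, bounded A -> J A) /\
  (forall A B, J B -> subset A B -> J A) /\
  (forall A B, J A -> J B -> J (fun x => A x \/ B x)).

Definition kappa_complete (J : (T -> Prop) -> Prop) : Prop :=
  forall (I : Type) (F : I -> T -> Prop),
    card_lt I T -> (forall i, J (F i)) -> J (fun x => exists i, F i x).

Definition NS_subset (J : (T -> Prop) -> Prop) : Prop :=
  forall A, nonstationary A -> J A.

Definition J_positive (J : (T -> Prop) -> Prop) (A : T -> Prop) : Prop := ~ J A.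

(* clubsuit^{-/tau}_kappa [J], with tau represented by the index type S *)
Definition clubsuit_minus (S : Type) (J : (T -> Prop) -> Prop) : Prop :=
  exists B : T -> S -> T -> Prop,
    (forall d i, acc d -> sub_cofinal (B d i) d) /\
    forall W, size_kappa W ->
      J_positive J (fun d => acc d /\ exists i, subset (B d i) W).

Definition clubsuit (J : (T -> Prop) -> Prop) : Prop :=
  exists s : T -> T -> Prop,
    (forall a, acc a -> sub_cofinal (s a) a) /\
    forall A, size_kappa A ->
      J_positive J (fun a => acc a /\ subset (s a) A).

End Ordinals.

(* Suppose clubsuit_kappa[J] fails.  Code functions h : tau -> kappa injectively by
   ordinals g(h).  For each i < tau, reading off the i-th coordinates of the codes in
   B^i_delta gives a candidate clubsuit-sequence, so some A_i of size kappa defeats it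
   modulo J.  Let W be the set of codes of the functions i |-> c_i(a) (a in A_0), where
   c_i(a) is a point of A_i above a.  At closure points delta of the coding, B^i_delta
   being contained in W forces the decoded i-th sequence to be cofinal in delta and
   contained in A_i.  Hence the J-positive set given by clubsuit^{-/tau} for W is covered
   by a nonstationary set and tau sets of J, contradicting kappa-completeness. *)
From Stdlib Require Import Classical ClassicalEpsilon ProofIrrelevance.
Set Implicit Arguments.

Lemma proj1_sig_inj (A : Type) (P : A -> Prop) (u v : {x | P x}) :
  proj1_sig u = proj1_sig v -> u = v.
Proof. apply eq_sig_hprop; intros; apply proof_irrelevance. Qed.

Lemma card_le_trans (A B C : Type) : card_le A B -> card_le B C -> card_le A C.
Proof.
  intros [f finj] [g ginj]. exists (fun x => g (f x)). auto.
Qed.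

Lemma card_eq_sym (A B : Type) : card_eq A B -> card_eq B A.
Proof.
  intros [f [finj fsur]].
  destruct (choice _ fsur) as [f' Hf'].
  exists f'. split.
  - intros x y E. rewrite <- (Hf' x), <- (Hf' y), E. reflexivity.
  - intro x. exists (f x). apply finj, Hf'.
Qed.

Lemma card_eq_trans (A B C : Type) : card_eq A B -> card_eq B C -> card_eq A C.
Proof.
  intros [f [finj fsur]] [g [ginj gsur]]. exists (fun x => g (f x)). split; auto.
  intro z. destruct (gsur z) as [y <-]. destruct (fsur y) as [x <-]. eauto.
Qed.

Lemma card_le_of_card_eq (A B : Type) : card_eq A B -> card_le B A.
Proof. intros H. destruct (card_eq_sym H) as [f [finj _]]. exists f; exact finj. Qed.

Lemma card_le_sig_sub (A : Type) (P Q : A -> Prop) :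
  (forall x, P x -> Q x) -> card_le {x | P x} {x | Q x}.
Proof.
  intros PQ. exists (fun u => exist Q (proj1_sig u) (PQ _ (proj2_sig u))).
  intros u v E. apply proj1_sig_inj. exact (f_equal (@proj1_sig _ _) E).
Qed.

Lemma card_eq_image (A B : Type) (P : A -> Prop) (F : A -> B) :
  (forall x y, P x -> P y -> F x = F y -> x = y) ->
  card_eq {x | P x} {y | exists x, P x /\ F x = y}.
Proof.
  intros Finj.
  exists (fun u => exist _ (F (proj1_sig u))
                    (ex_intro _ (proj1_sig u) (conj (proj2_sig u) eq_refl))).
  split.
  - intros [x Px] [y Py] E. apply proj1_sig_inj, Finj; auto.
    exact (f_equal (@proj1_sig _ _) E).
  - intros [y [x [Px <-]]]. exists (exist P x Px). apply proj1_sig_inj. reflexivity.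
Qed.

Lemma two_points_of_not_card_le_unit (S : Type) :
  ~ card_le S unit -> exists s0 s1 : S, s0 <> s1.
Proof.
  intros N. apply NNPP; intros All. apply N. exists (fun _ => tt). intros x y _.
  apply NNPP; intro xy. apply All; eauto.
Qed.

Lemma card_le_pair_of_exp (S T : Type) (s0 s1 : S) :
  s0 <> s1 -> card_le (S -> T) T -> card_le (T * T) T.
Proof.
  intros s01 [g ginj].
  exists (fun p => g (fun s => if excluded_middle_informative (s = s0) then fst p else snd p)).
  intros [x y] [x' y'] E. apply ginj in E.
  pose proof (f_equal (fun h => h s0) E) as E0. pose proof (f_equal (fun h => h s1) E) as E1.
  simpl in E0, E1.
  destruct (excluded_middle_informative (s0 = s0)) as [_|]; [|congruence].
  destruct (excluded_middle_informative (s1 = s0)); [congruence|].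
  congruence.
Qed.

(* y goes to the code of (y, c1), or to that of (y, c2) if the former is x. *)
Lemma card_le_punctured (T : Type) (c1 c2 : T) :
  c1 <> c2 -> card_le (T * T) T -> forall x : T, card_le T {y | y <> x}.
Proof.
  intros c12 [p pinj] x.
  assert (Hmiss : forall y,
            p (y, if excluded_middle_informative (p (y, c1) = x) then c2 else c1) <> x).
  { intros y. destruct (excluded_middle_informative (p (y, c1) = x)) as [e|e]; auto.
    intros e2. rewrite <- e2 in e. apply pinj in e. congruence. }
  exists (fun y => exist (fun z => z <> x) _ (Hmiss y)).
  intros y y' E. apply (f_equal (@proj1_sig _ _)) in E. apply pinj in E. congruence.
Qed.

Section WellOrder.

Variables (T : Type) (lt : T -> T -> Prop).
Hypothesis wo : strict_wellorder lt.

Let lt_trans : forall x y z, lt x y -> lt y z -> lt x z := proj1 wo.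

Lemma lt_irrefl x : ~ lt x x.
Proof.
  induction (proj2 (proj2 wo) x) as [x _ IH]. intros H. exact (IH x H H).
Qed.

Lemma le_refl x : le lt x x.
Proof. right; reflexivity. Qed.

Lemma le_lt_trans {x y z : T} : le lt x y -> lt y z -> lt x z.
Proof. intros [H|<-] H2; eauto. Qed.

Lemma lt_le_trans {x y z : T} : lt x y -> le lt y z -> lt x z.
Proof. intros H [H2|<-]; eauto. Qed.

Lemma le_trans {x y z : T} : le lt x y -> le lt y z -> le lt x z.
Proof. intros H [H2|<-]; [left; eapply le_lt_trans; eauto | exact H]. Qed.

Lemma not_lt_le {x y : T} : ~ lt x y -> le lt y x.
Proof.
  intros H. destruct (proj1 (proj2 wo) x y) as [h|[->|h]];
    [contradiction | apply le_refl | left; exact h].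
Qed.

Lemma exists_least (P : T -> Prop) :
  (exists x, P x) -> exists x, P x /\ forall y, P y -> ~ lt y x.
Proof.
  intros [x Px]. induction (proj2 (proj2 wo) x) as [x _ IH].
  destruct (classic (exists y, P y /\ lt y x)) as [[y [Py ly]] | N].
  - exact (IH y ly Py).
  - exists x; split; [exact Px|]. intros y Py ly; apply N; eauto.
Qed.

Lemma bounded_or (P Q : T -> Prop) :
  (exists b, forall y, P y -> lt y b) -> (exists b, forall y, Q y -> lt y b) ->
  exists b, forall y, P y \/ Q y -> lt y b.
Proof.
  intros [b Hb] [b' Hb'].
  destruct (classic (lt b b')) as [bb' | nbb'];
    [exists b' | exists b]; intros y [Py | Qy]; eauto.
  exact (lt_le_trans (Hb' y Qy) (not_lt_le nbb')).
Qed.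

Lemma strict_increasing_injective (f : nat -> T) :
  (forall n, lt (f n) (f (S n))) -> forall m n, f m = f n -> m = n.
Proof.
  intros inc.
  assert (mono : forall m n, m < n -> lt (f m) (f n)).
  { intros m n mn. induction mn as [|n _ IH]; eauto. }
  intros m n E. destruct (PeanoNat.Nat.lt_total m n) as [h|[h|h]]; [| exact h |];
    apply mono in h; rewrite E in h; destruct (lt_irrefl h).
Qed.

Lemma nat_card_lt :
  uncountable T -> (forall x, exists y, lt x y) -> forall c : T, card_lt nat T.
Proof.
  intros unc up c. split; [|exact unc].
  destruct (choice _ up) as [succ Hsucc].
  exists (fun n => Nat.iter n succ c).
  apply strict_increasing_injective. intro n. apply Hsucc.
Qed.

Hypothesis seg_small : forall a : T, card_lt {x | lt x a} T.

Lemma no_greatest (c1 c2 : T) : c1 <> c2 -> card_le (T * T) T -> forall x, exists y, lt x y.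
Proof.
  intros c12 pair x. apply NNPP; intros N.
  apply (proj2 (seg_small x)).
  eapply card_le_trans; [exact (card_le_punctured c12 pair x)|].
  apply card_le_sig_sub. intros y yx.
  destruct (not_lt_le (fun h => N (ex_intro _ y h))) as [h|h]; [exact h | congruence].
Qed.

Lemma size_kappa_unbounded (A : T -> Prop) :
  size_kappa A -> forall a, exists x, A x /\ le lt a x.
Proof.
  intros sizeA a. apply NNPP; intros N.
  apply (proj2 (seg_small a)).
  eapply card_le_trans; [exact (card_le_of_card_eq sizeA)|].
  apply card_le_sig_sub. intros x Ax. apply NNPP; intros h.
  apply N. exists x. split; [exact Ax | apply not_lt_le, h].
Qed.

Hypothesis reg : regular lt.

Lemma small_image_bounded (I : Type) (h : I -> T) :
  card_lt I T -> exists b, forall i, lt (h i) b.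
Proof.
  intros [_ nle].
  destruct (reg (fun x => exists i, h i = x)) as [b Hb].
  - split; [exists (@proj1_sig _ _); apply proj1_sig_inj|].
    intros le_T_X. apply nle. eapply card_le_trans; [exact le_T_X|].
    destruct (choice (fun (u : {x | exists i, h i = x}) i => h i = proj1_sig u)
                (fun u => proj2_sig u))
      as [pre Hpre].
    exists pre. intros u v E. apply proj1_sig_inj. rewrite <- Hpre, E, Hpre. reflexivity.
  - exists b. intros i. apply Hb. exists i; reflexivity.
Qed.

(* Unboundedness: iterate omega times a bound for everything [R] produces below the
   current point, and take the supremum. *)
Lemma club_closure_points (R : T -> T -> Prop) :
  card_lt nat T -> (forall x, exists b, forall y, R x y -> lt y b) ->
  club lt (fun d => forall x y, lt x d -> R x y -> lt y d).
Proof.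
  intros cn HR. split.
  - intros d [_ accd] Hcof x y xd Rxy.
    destruct (accd x xd) as [x' [xx' x'd]].
    destruct (Hcof x' x'd) as [e [Ce [x'e ed]]].
    apply lt_trans with e; [|exact ed]. apply (Ce x y); [eapply lt_le_trans; eauto | exact Rxy].
  - intros a.
    destruct (choice _ HR) as [bR HbR].
    assert (Hnext : forall x, exists m, forall z y, lt z x -> R z y -> lt y m).
    { intros x.
      destruct (small_image_bounded (fun z : {z | lt z x} => bR (proj1_sig z)) (seg_small x))
        as [m Hm].
      exists m. intros z y zx Rzy. apply lt_trans with (bR z); [exact (HbR z y Rzy)|].
      exact (Hm (exist _ z zx)). }
    destruct (choice _ Hnext) as [next Hnext'].
    set (seq := fun n => Nat.iter n next a).
    destruct (@exists_least (fun d => forall n, le lt (seq n) d)) as [d [ubd leastd]].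
    { destruct (small_image_bounded seq cn) as [b Hb]. exists b. intros n. left; apply Hb. }
    exists d. split; [|exact (ubd 0)].
    intros x y xd Rxy.
    assert (Hn : exists n, lt x (seq n)).
    { apply NNPP; intros N. apply (leastd x); [|exact xd].
      intros n. apply not_lt_le. intros h; apply N; eauto. }
    destruct Hn as [n xn].
    exact (lt_le_trans (Hnext' (seq n) x y xn Rxy) (ubd (S n))).
Qed.

End WellOrder.

Lemma size_kappa_image (T : Type) (A : T -> Prop) (F : T -> T) :
  size_kappa A -> (forall a b, A a -> A b -> F a = F b -> a = b) ->
  size_kappa (fun y => exists a, A a /\ F a = y).
Proof.
  intros sizeA Finj. exact (card_eq_trans (card_eq_sym (card_eq_image A F Finj)) sizeA).
Qed.

Section Repair.

Variables (T : Type) (lt : T -> T -> Prop).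

(* The decoded sequences are cofinal only at closure points; elsewhere they are replaced
   by the whole initial segment so as to obtain genuine clubsuit-candidates. *)
Definition cofinal_repair (s : T -> T -> Prop) (d y : T) : Prop :=
  (sub_cofinal lt (s d) d /\ s d y) \/ (~ sub_cofinal lt (s d) d /\ lt y d).

Lemma sub_cofinal_repair s d : sub_cofinal lt (cofinal_repair s d) d.
Proof.
  destruct (classic (sub_cofinal lt (s d) d)) as [Hcof | N]; split.
  - intros y [[_ H] | [H _]]; [exact (proj1 Hcof y H) | contradiction].
  - intros b bd. destruct (proj2 Hcof b bd) as [e [se be]].
    exists e. split; [left; split|]; auto.
  - intros y [[H _] | [_ H]]; [contradiction | exact H].
  - intros b bd. exists b. split; [right; split; auto | right; reflexivity].
Qed.

Lemma cofinal_repair_subset s d X :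
  sub_cofinal lt (s d) d -> subset (s d) X -> subset (cofinal_repair s d) X.
Proof. intros cof sX y [[_ H] | [N _]]; [exact (sX y H) | contradiction]. Qed.

Lemma not_clubsuit_counterexample (J : (T -> Prop) -> Prop) :
  ~ clubsuit lt J -> forall s, (forall a, acc lt a -> sub_cofinal lt (s a) a) ->
  exists A, size_kappa A /\ J (fun a => acc lt a /\ subset (s a) A).
Proof.
  intros NC s cof. apply NNPP; intros N. apply NC. exists s. split; [exact cof|].
  intros A sizeA JA. apply N. exists A. split; [exact sizeA | exact JA].
Qed.

End Repair.

Section Coding.

Variables (T : Type) (lt : T -> T -> Prop) (S : Type) (g : (S -> T) -> T).
Hypotheses (wo : strict_wellorder lt) (ginj : forall h h', g h = g h' -> h = h').

Definition trace (X : T -> Prop) (i : S) (y : T) : Prop := exists h, X (g h) /\ h i = y.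

Variables (c : S -> T -> T) (X : T -> Prop) (i : S).
Hypothesis X_codes : forall x, X x -> exists a, g (fun j => c j a) = x.

Lemma trace_subset (A : S -> T -> Prop) :
  (forall j a, A j (c j a)) -> subset (trace X i) (A i).
Proof.
  intros c_in y [h [Xh <-]]. destruct (X_codes Xh) as [a E].
  apply ginj in E. subst h. apply c_in.
Qed.

(* A code [x] above every code of an [a < b] must code some [a >= b]. *)
Lemma trace_sub_cofinal (d : T) :
  (forall j a, le lt a (c j a)) -> sub_cofinal lt X d ->
  (forall h, lt (g h) d -> lt (h i) d) ->
  (forall b, lt b d -> exists k, lt k d /\ forall a, lt a b -> lt (g (fun j => c j a)) k) ->
  sub_cofinal lt (trace X i) d.
Proof.
  intros c_ge [below cof] coord_closed code_bound. split.
  - intros y [h [Xh <-]]. apply coord_closed, below, Xh.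
  - intros b bd. destruct (code_bound b bd) as [k [kd Hk]].
    destruct (cof k kd) as [x [Xx kx]]. destruct (X_codes Xx) as [a <-].
    exists (c i a). split; [exists (fun j => c j a); split; [exact Xx | reflexivity]|].
    apply (le_trans wo (y := a)); [|apply c_ge].
    apply (not_lt_le wo). intros ab. apply (lt_irrefl wo (g (fun j => c j a))).
    exact (lt_le_trans wo (Hk a ab) kx).
Qed.

End Coding.

Section CodingClub.

Variables (T : Type) (lt : T -> T -> Prop) (S : Type) (g : (S -> T) -> T).
Hypotheses (wo : strict_wellorder lt) (seg_small : forall a : T, card_lt {x | lt x a} T)
  (reg : regular lt) (nat_small : card_lt nat T) (up : forall x, exists y, lt x y)
  (S_small : card_lt S T) (ginj : forall h h', g h = g h' -> h = h').

(* [c i a] stays at [a] inside [A i], which makes [a |-> c i a] injective on [A i]. *)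
Lemma exists_choice_above (A : S -> T -> Prop) :
  (forall i, size_kappa (A i)) ->
  exists c : S -> T -> T, forall i a, A i (c i a) /\ le lt a (c i a) /\ (A i a -> c i a = a).
Proof.
  intros sizeA.
  apply (choice (fun i ci => forall a, A i (ci a) /\ le lt a (ci a) /\ (A i a -> ci a = a))).
  intros i. apply (choice (fun a x => A i x /\ le lt a x /\ (A i a -> x = a))). intros a.
  destruct (classic (A i a)) as [Aa | nAa].
  - exists a. split; [exact Aa | split; [apply le_refl | reflexivity]].
  - destruct (size_kappa_unbounded wo seg_small (sizeA i) a) as [x [Ax ax]].
    exists x. split; [exact Ax | split; [exact ax | contradiction]].
Qed.

Lemma coordinates_bounded (x : T) :
  exists b, forall y, (exists h i, g h = x /\ h i = y) -> lt y b.
Proof.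
  destruct (classic (exists h, g h = x)) as [[h <-] | N].
  - destruct (small_image_bounded reg h S_small) as [b Hb]. exists b.
    intros y [h' [i [E <-]]]. apply ginj in E. subst h'. apply Hb.
  - exists x. intros y [h [i [E _]]]. exfalso. eauto.
Qed.

Lemma exists_coding_set_club (A : S -> T -> Prop) (i0 : S) :
  (forall i, size_kappa (A i)) ->
  exists W C, size_kappa W /\ club lt C /\
    forall d X i, C d -> sub_cofinal lt X d -> subset X W ->
      sub_cofinal lt (trace g X i) d /\ subset (trace g X i) (A i).
Proof.
  intros sizeA. destruct (exists_choice_above A sizeA) as [c Hc].
  set (code := fun a => g (fun i => c i a)).
  assert (Hk : forall b, exists k, forall a, lt a b -> lt (code a) k).
  { intros b. destruct (small_image_bounded reg (fun a : {a | lt a b} => code (proj1_sig a))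
                          (seg_small b)) as [k Hk].
    exists k. intros a ab. exact (Hk (exist _ a ab)). }
  destruct (choice _ Hk) as [k Hk'].
  set (R := fun x y => (exists h i, g h = x /\ h i = y) \/ y = k x).
  exists (fun x => exists a, A i0 a /\ code a = x),
         (fun d => forall x y, lt x d -> R x y -> lt y d).
  split; [|split].
  - apply size_kappa_image; [exact (sizeA i0)|].
    intros a b Aa Ab E. apply ginj, (f_equal (fun h => h i0)) in E.
    rewrite (proj2 (proj2 (Hc i0 a)) Aa), (proj2 (proj2 (Hc i0 b)) Ab) in E. exact E.
  - apply club_closure_points; [exact wo | exact seg_small | exact reg | exact nat_small |].
    intros x. apply bounded_or; [exact wo | apply coordinates_bounded|].
    destruct (up (k x)) as [b kb]. exists b. intros y ->. exact kb.
  - intros d X i Cd cof XW.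
    assert (X_codes : forall x, X x -> exists a, code a = x).
    { intros x Xx. destruct (XW x Xx) as [a [_ E]]. exists a. exact E. }
    split.
    + apply (trace_sub_cofinal g wo c i X_codes); [intros j a; apply Hc | exact cof | |].
      * intros h gh. apply (Cd (g h)); [exact gh | left; eauto].
      * intros b bd. exists (k b).
        split; [exact (Cd b (k b) bd (or_intror eq_refl)) | apply Hk'].
    + apply (trace_subset ginj c X_codes). intros j a. apply Hc.
Qed.

End CodingClub.

Theorem proposition3p16 (T : Type) (lt : T -> T -> Prop) (S : Type)
  (J : (T -> Prop) -> Prop) :
  is_cardinal_order lt -> regular lt -> uncountable T ->
  card_lt unit S -> card_lt S T -> card_eq (S -> T) T ->
  ideal lt J -> kappa_complete J -> NS_subset lt J ->
  clubsuit_minus lt S J ->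
  clubsuit lt J.
Proof.
  intros [wo seg_small] reg unc [_ not_le_S_unit] S_small [g [ginj _]]
    [_ [_ [_ [Jsub Jun]]]] complete ns [B [Bcof Bpos]].
  destruct (two_points_of_not_card_le_unit not_le_S_unit) as [s0 [s1 s01]].
  destruct (proj1 S_small) as [j jinj].
  assert (up : forall x, exists y, lt x y).
  { apply (no_greatest wo seg_small (c1 := j s0) (c2 := j s1)).
    - intros E. apply s01, jinj, E.
    - exact (card_le_pair_of_exp s01 (ex_intro _ g ginj)). }
  pose proof (nat_card_lt wo unc up (j s0)) as nat_small.
  set (t := fun i => cofinal_repair lt (fun d => trace g (B d i) i)).
  apply NNPP; intros NC.
  destruct (choice _ (fun i => not_clubsuit_counterexample NC (t i)
                                  (fun d _ => sub_cofinal_repair _ _ d))) as [A HA].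
  destruct (exists_coding_set_club g wo seg_small reg nat_small up S_small ginj A s0
              (fun i => proj1 (HA i))) as [W [C [sizeW [clubC HC]]]].
  apply (Bpos W sizeW), Jsub with
    (fun d => ~ C d \/ exists i, acc lt d /\ subset (t i d) (A i)).
  - apply Jun.
    + apply ns. exists C. split; [exact clubC | intros x Cx N; exact (N Cx)].
    + apply (complete S (fun i d => acc lt d /\ subset (t i d) (A i)) S_small).
      intros i. exact (proj2 (HA i)).
  - intros d [accd [i BW]]. destruct (classic (C d)) as [Cd | nCd]; [right | left; exact nCd].
    exists i. split; [exact accd|].
    destruct (HC d (B d i) i Cd (Bcof d i accd) BW) as [cof sub].
    apply cofinal_repair_subset; assumption.
Qed.
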